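(* Let $\varepsilon>0$ and choose $\alpha$ with $0<\alpha\leq \varepsilon/(2M)$. If a pair $(x,s)\in\mathrm{dom}\, h\times\mathbb{R}^n$ satisfies $\phi^\alpha(x)+\psi^\alpha(s)\leq\varepsilon/2$, then $\phi(x)-\phi_*\leq \varepsilon$.
   Context: Let $\|\cdot\|$ be a norm on $\mathbb{R}^n$ with dual norm $\|\cdot\|_*$. Let $f:\mathbb{R}^n\to\mathbb{R}$ be convex, differentiable and $L$-smooth ($L>0$) with respect to $\|\cdot\|$, and let $h:\mathbb{R}^n\to(-\infty,\infty]$ be closed proper convex with bounded domain $\mathrm{dom}\, h$. Let $w:\mathbb{R}^n\to[0,+\infty]$ be non-negative, closed, and $1$-strongly convex with respect to $\|\cdot\|$ on $\mathrm{dom}\, h$, with $M:=\max_{x\in\mathrm{dom}\, h}w(x)<\infty$. Define $\phi=f+h$, $\phi_*=\min_{x\in\mathbb{R}^n}\phi(x)$, and for $\alpha>0$: $h^\alpha=h+\alpha w$, $\phi^\alpha=f+h^\alpha$, and $\psi^\alpha(z)=(h^\alpha)^*(-z)+f^*(z)$, where $g^*(y)=\sup_x\{\langle y,x\rangle-g(x)\}$ denotes the convex conjugate. *)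

From HB Require Import structures.
From mathcomp Require Import all_boot all_order all_algebra.
From mathcomp Require Import all_classical all_reals all_analysis.
Set Implicit Arguments. Unset Strict Implicit. Unset Printing Implicit Defensive.
Import Order.TTheory GRing.Theory Num.Theory.
Import numFieldNormedType.Exports.
Local Open Scope classical_set_scope.
Local Open Scope ring_scope.

Section Defs.
Variables (R : realType) (n : nat).
Local Notation V := 'rV[R]_n.

Definition dotv (y x : V) : R := \sum_(i < n) y ord0 i * x ord0 i.

Definition is_norm (N : V -> R) : Prop :=
  [/\ forall x, N x = 0 -> x = 0,
      forall (a : R) x, N (a *: x) = `|a| * N x &
      forall x y, N (x + y) <= N x + N y].

Definition dual_norm (N : V -> R) (y : V) : \bar R :=
  ereal_sup [set (dotv y x)%:E | x in [set x | N x <= 1]].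

Definition grad (f : V -> R) (x : V) : V := \row_(i < n) ('d f x (delta_mx 0 i)).

Definition convex_fun (f : V -> R) : Prop :=
  forall (x y : V) (t : R), 0 < t < 1 ->
    f (t *: x + (1 - t) *: y) <= t * f x + (1 - t) * f y.

Definition L_smooth (N : V -> R) (L : R) (f : V -> R) : Prop :=
  forall x y, (dual_norm N (grad f x - grad f y) <= (L * N (x - y))%:E)%E.

(* extended-real valued functions R^n -> (-oo, +oo] *)
Definition dom (g : V -> \bar R) : set V := [set x | (g x < +oo)%E].

Definition convex_efun (g : V -> \bar R) : Prop :=
  forall (x y : V) (t : R), 0 < t < 1 ->
    (g ((t *: x + (1 - t) *: y)%R) <= t%:E * g x + ((1 - t)%R)%:E * g y)%E.

Definition proper_efun (g : V -> \bar R) : Prop :=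
  (forall x, g x != -oo%E) /\ exists x, (g x < +oo)%E.

Definition closed_efun (g : V -> \bar R) : Prop := lower_semicontinuous g.

Definition strongly_convex_on (N : V -> R) (D : set V) (g : V -> \bar R) : Prop :=
  forall (x y : V) (t : R), D x -> D y -> 0 < t < 1 ->
    (g ((t *: x + (1 - t) *: y)%R) <=
       t%:E * g x + ((1 - t)%R)%:E * g y - ((t * (1 - t) / 2 * N (x - y) ^+ 2)%R)%:E)%E.

Definition conj_efun (g : V -> \bar R) (y : V) : \bar R :=
  ereal_sup [set ((dotv y x)%:E - g x)%E | x in [set: V]].

Definition conj_fun (f : V -> R) (y : V) : \bar R :=
  ereal_sup [set (dotv y x - f x)%:E | x in [set: V]].

Definition phi (f : V -> R) (h : V -> \bar R) (x : V) : \bar R := ((f x)%:E + h x)%E.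

(* phi_* = min_x phi(x) (taken as the infimum; attained under the hypotheses) *)
Definition phi_star (f : V -> R) (h : V -> \bar R) : \bar R :=
  ereal_inf [set phi f h x | x in [set: V]].

Definition h_alpha (h w : V -> \bar R) (alpha : R) (x : V) : \bar R :=
  (h x + alpha%:E * w x)%E.

Definition phi_alpha (f : V -> R) (h w : V -> \bar R) (alpha : R) (x : V) : \bar R :=
  ((f x)%:E + h_alpha h w alpha x)%E.

Definition psi_alpha (f : V -> R) (h w : V -> \bar R) (alpha : R) (z : V) : \bar R :=
  (conj_efun (h_alpha h w alpha) (- z) + conj_fun f z)%E.

End Defs.

From HB Require Import structures.
From mathcomp Require Import all_boot all_order all_algebra.
From mathcomp Require Import all_classical all_reals all_analysis.
From mathcomp Require Import lra.
Set Implicit Arguments. Unset Strict Implicit.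
Import Order.TTheory GRing.Theory Num.Theory.
Import numFieldNormedType.Exports.
Local Open Scope classical_set_scope.
Local Open Scope ring_scope.

(* Weak duality (Fenchel-Young applied to f and h^alpha at the same point u)
   gives psi^alpha(s) >= -phi^alpha(u) for every u, hence
   phi^alpha(x) <= phi^alpha(u) + eps/2.  On dom h the regularization alpha w
   lies in [0, alpha M] with alpha M <= eps/2, so passing from phi^alpha back
   to phi costs at most another eps/2. *)

Lemma sube_ereal_inf_le (R : realType) (T : Type) (F : T -> \bar R)
    (a : \bar R) (e : R) :
  (forall t, (a <= F t + e%:E)%E) ->
  (a - ereal_inf [set F t | t in [set: T]] <= e%:E)%E.
Proof.
move=> le_aF; rewrite lee_subel_addr // addeC -leeBlDr //.
by apply/ereal_infP => _ [t _ <-]; rewrite leeBlDr ?le_aF.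
Qed.

Section Conjugates.
Variables (R : realType) (n : nat).
Local Notation V := 'rV[R]_n.

Lemma dotvN (s u : V) : dotv (- s) u = - dotv s u.
Proof. by rewrite /dotv -sumrN; apply: eq_bigr => i _; rewrite mxE mulNr. Qed.

Lemma conj_efun_ge (g : V -> \bar R) (y u : V) :
  ((dotv y u)%:E - g u <= conj_efun g y)%E.
Proof. by apply: ereal_sup_ubound; exists u. Qed.

Lemma conj_fun_ge (f : V -> R) (y u : V) :
  ((dotv y u - f u)%:E <= conj_fun f y)%E.
Proof. by apply: ereal_sup_ubound; exists u. Qed.

Lemma fenchel_weak_duality (f : V -> R) (g : V -> \bar R) (s u : V) :
  (- ((f u)%:E + g u) <= conj_efun g (- s) + conj_fun f s)%E.
Proof.
have conj_f := conj_fun_ge f s u.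
have := conj_efun_ge g (- s) u; case: (g u) => [r| |] conj_g.
- apply: le_trans (leeD conj_g conj_f); rewrite -!EFinD lee_fin dotvN; lra.
- by rewrite addey // leNye.
- rewrite /= addey // leye_eq in conj_g; rewrite (eqP conj_g).
  by rewrite addye ?leey // gt_eqF // (lt_le_trans (ltNyr _) conj_f).
Qed.

End Conjugates.

Section Regularization.
Variables (R : realType) (n : nat).
Local Notation V := 'rV[R]_n.
Variables (f : V -> R) (h w : V -> \bar R) (alpha M : R).
Hypothesis alpha_ge0 : 0 <= alpha.
Hypothesis w_ge0 : forall y, (0 <= w y)%E.
Hypothesis w_le_M : forall y, dom h y -> (w y <= M%:E)%E.

Lemma phi_le_phi_alpha u : (phi f h u <= phi_alpha f h w alpha u)%E.
Proof. by rewrite /phi_alpha /h_alpha addeA leeDl // mule_ge0. Qed.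

Lemma phi_alpha_le_phi u : dom h u ->
  (phi_alpha f h w alpha u <= phi f h u + (alpha * M)%:E)%E.
Proof.
move=> hu; rewrite /phi_alpha /h_alpha addeA EFinM.
by apply/leeD2l/lee_wpmul2l; [rewrite lee_fin|exact: w_le_M].
Qed.

Lemma fin_num_phi_alpha u : (h u != -oo)%E -> dom h u ->
  phi_alpha f h w alpha u \is a fin_num.
Proof.
move=> hu_noo hu; have w_fin : w u \is a fin_num.
  by rewrite fin_numE gt_eqF ?(lt_le_trans (ltNyr 0) (w_ge0 u)) // lt_eqF //
    (le_lt_trans (w_le_M hu)) ?ltry.
rewrite /phi_alpha /h_alpha !fin_numD fin_numM // andbT /=.
by rewrite fin_numE hu_noo lt_eqF.
Qed.

End Regularization.

Theorem lemma2p1 (R : realType) (n : nat)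
  (N : 'rV[R]_n -> R) (f : 'rV[R]_n -> R) (h w : 'rV[R]_n -> \bar R)
  (L M eps alpha : R) (x s : 'rV[R]_n) :
  is_norm N ->
  convex_fun f -> (forall y, differentiable f y) -> 0 < L -> L_smooth N L f ->
  proper_efun h -> closed_efun h -> convex_efun h ->
  (exists B : R, forall y, dom h y -> N y <= B) ->
  (forall y, (0 <= w y)%E) -> closed_efun w ->
  strongly_convex_on N (dom h) w ->
  (exists2 y0, dom h y0 & w y0 = M%:E) ->
  (forall y, dom h y -> (w y <= M%:E)%E) ->
  0 < eps -> 0 < alpha -> alpha * (2 * M) <= eps ->
  dom h x ->
  (phi_alpha f h w alpha x + psi_alpha f h w alpha s <= (eps / 2)%:E)%E ->
  (phi f h x - phi_star f h <= eps%:E)%E.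
Proof.
move=> _ _ _ _ _ [h_noo _] _ _ _ w_ge0 _ _ _ w_le_M _ /ltW alpha_ge0 alphaM _ gap.
apply: sube_ereal_inf_le => u.
have [hu|] := boolP (h u < +oo)%E; last first.
  by rewrite ltey negbK /phi => /eqP ->; rewrite addey // addye // leey.
have gap_u : (phi_alpha f h w alpha x - phi_alpha f h w alpha u <= (eps / 2)%:E)%E.
  exact: le_trans (leeD2l _ (fenchel_weak_duality f _ s u)) gap.
have fin_u := fin_num_phi_alpha f alpha w_ge0 w_le_M (h_noo u) hu.
rewrite leeBlDr // in gap_u.
apply: le_trans (phi_le_phi_alpha f h alpha_ge0 w_ge0 x) _.
apply: le_trans gap_u _; rewrite addeC.
apply: le_trans (leeD2r _ (phi_alpha_le_phi f alpha_ge0 w_le_M hu)) _.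
rewrite -addeA -EFinD; apply: leeD2l; rewrite lee_fin; lra.
Qed.
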